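(* In the semi-discrete setting described in the context, let $c\in\mathcal{F}(\mathring\Omega_h)$ and let $X$ be a solution of \[\begin{cases}-\partial_tX+AX=c\,\delta_{t=T},\\ X(0)=0,\\ X|_{\Gamma^0}=0,\\ X|_{\Gamma^1}=0.\end{cases}\] Then $X\equiv0$, and consequently $c=0$.
   Context: Let $h>0$, integers $M,N\ge2$, grid $\Omega_h=\{(ih,jh):0\le i\le M,0\le j\le N\}$ with nodes indexed $(i,j)$, interior $\mathring\Omega_h=\{1\le i\le M-1,1\le j\le N-1\}$; $\Gamma^0=\{(0,j):0\le j\le N\}$ and $\Gamma^1=\{(1,j):1\le j\le N-1\}$; functions on $\mathring\Omega_h$ are extended by $0$ on all boundary nodes. $A$ is the 5-point discrete Dirichlet Laplacian $[A\phi]_{(i,j)}=h^{-2}(4\phi_{(i,j)}-\phi_{(i+1,j)}-\phi_{(i-1,j)}-\phi_{(i,j+1)}-\phi_{(i,j-1)})$. The equation with right-hand side $c\,\delta_{t=T}$ is understood in the distributional sense in time: $-\partial_tX+AX=0$ on $[0,T)$ and on $(T,\infty)$, with the jump $X(T^+)-X(T^-)=c$. *)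

From Stdlib Require Import Reals Lra Lia.
From Coquelicot Require Import Coquelicot.
Open Scope R_scope.

(* Grid functions: nodes (i,j) with 0 <= i <= M, 0 <= j <= N, indexed by nat. *)
Definition gridfun := nat -> nat -> R.

Definition interior_node (M N i j : nat) : Prop :=
  (1 <= i <= M - 1)%nat /\ (1 <= j <= N - 1)%nat.

Definition interiorb (M N i j : nat) : bool :=
  (Nat.leb 1 i && Nat.leb i (M - 1) && Nat.leb 1 j && Nat.leb j (N - 1))%bool.

Definition ext (M N : nat) (phi : gridfun) : gridfun :=
  fun i j => if interiorb M N i j then phi i j else 0.

Definition Alap (h : R) (M N : nat) (phi : gridfun) (i j : nat) : R :=
  let p := ext M N phi in
  / (h ^ 2) * (4 * p i j - p (S i) j - p (i - 1)%nat j
               - p i (S j) - p i (j - 1)%nat).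

(* The condition on Gamma^1 kills the first interior column at every time t <> T.
   If the columns 1, ..., k vanish for all such t, then each X(., k, j) is locally
   constant near every t > 0, t <> T, so its derivative (A X)(k, j) vanishes; in
   the 5-point stencil at (k, j) every entry but the east neighbour (k+1, j) is
   already zero, hence column k+1 vanishes too (and at t = 0 it vanishes by the
   initial condition).  So X = 0 away from t = T, both one-sided limits at T are
   0, and the jump c is 0. *)
From Stdlib Require Import Reals Lra Lia.
From Coquelicot Require Import Coquelicot.
Open Scope R_scope.

Lemma interiorb_iff M N i j : interiorb M N i j = true <-> interior_node M N i j.
Proof.
  unfold interiorb, interior_node.
  rewrite !Bool.andb_true_iff, !Nat.leb_le. tauto.
Qed.

Lemma ext_interior M N p i j : interior_node M N i j -> ext M N p i j = p i j.
Proof. intro Hij. unfold ext. apply interiorb_iff in Hij. now rewrite Hij. Qed.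

Lemma ext_zero_column M N p i j :
  (forall j', interior_node M N i j' -> p i j' = 0) -> ext M N p i j = 0.
Proof.
  intro Hcol. unfold ext. destruct (interiorb M N i j) eqn:E; [|reflexivity].
  apply Hcol, interiorb_iff, E.
Qed.

(* Solving the stencil at (i, j) for its east neighbour: discrete unique continuation. *)
Lemma Alap_zero_east h M N p i j :
  h <> 0 -> interior_node M N (S i) j ->
  (forall i' j', (i' <= i)%nat -> interior_node M N i' j' -> p i' j' = 0) ->
  Alap h M N p i j = 0 -> p (S i) j = 0.
Proof.
  intros Hh Heast Hwest HA.
  assert (Hzero : forall i', (i' <= i)%nat -> forall j', ext M N p i' j' = 0).
  { intros i' Hi' j'. apply ext_zero_column. intros j'' Hn. now apply Hwest. }
  unfold Alap in HA; cbv zeta in HA.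
  rewrite (Hzero i (le_n _)), (Hzero (i - 1)%nat ltac:(lia)),
    (Hzero i (le_n _) (S j)), (Hzero i (le_n _) (j - 1)%nat),
    ext_interior in HA by exact Heast.
  apply Rmult_integral in HA as [HA|HA]; [|lra].
  exfalso. revert HA. apply Rinv_neq_0_compat, pow_nonzero, Hh.
Qed.

Lemma is_derive_locally_zero (f : R -> R) t l :
  locally t (fun s => f s = 0) -> is_derive f t l -> l = 0.
Proof.
  intros Hloc Hd.
  apply (is_derive_ext_loc _ (fun _ => 0)) in Hd; [|exact Hloc].
  rewrite <- (is_derive_unique _ _ _ Hd). apply Derive_const.
Qed.

Lemma filterlim_eventually_zero {F : (R -> Prop) -> Prop} {FF : ProperFilter F}
  (f : R -> R) l :
  F (fun s => f s = 0) -> filterlim f F (locally l) -> l = 0.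
Proof.
  intros Hev Hlim.
  apply (filterlim_locally_unique (FF:=Proper_StrongProper _ FF) f); [exact Hlim|].
  apply (filterlim_ext_loc (fun _ => 0)); [|apply filterlim_const].
  apply (filter_imp _ _ (fun s Hs => eq_sym Hs) Hev).
Qed.

Section Propagation.

Variables (h T : R) (M N : nat) (X : R -> gridfun).
Hypothesis h_neq0 : h <> 0.
Hypothesis dynamics : forall t, (0 < t < T \/ T < t) ->
  forall i j, interior_node M N i j -> is_derive (fun s => X s i j) t (Alap h M N (X t) i j).
Hypothesis initial_zero : forall i j, interior_node M N i j -> X 0 i j = 0.
Hypothesis Gamma1_zero : forall t, 0 <= t -> t <> T ->
  forall j, (1 <= j <= N - 1)%nat -> X t 1%nat j = 0.

Lemma Alap_zero_off_jump i j t :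
  0 < t -> t <> T -> interior_node M N i j ->
  (forall s, 0 <= s -> s <> T -> X s i j = 0) -> Alap h M N (X t) i j = 0.
Proof.
  intros Ht HtT Hij Hzero.
  apply (is_derive_locally_zero (fun s => X s i j) t).
  - apply (filter_imp (fun s => 0 < s /\ s <> T)).
    + intros s [Hs HsT]. apply Hzero; [lra | exact HsT].
    + now apply (open_and _ _ (open_gt 0) (open_neq T)).
  - apply dynamics; [|exact Hij].
    destruct (Rlt_or_le t T) as [HtT'|HTt]; [left; lra | right; lra].
Qed.

Lemma X_zero_columns k t :
  0 <= t -> t <> T ->
  forall i j, (i <= S k)%nat -> interior_node M N i j -> X t i j = 0.
Proof.
  revert t; induction k as [|k IH]; intros t Ht HtT i j Hi Hij.
  - replace i with 1%nat by (destruct Hij; lia). apply Gamma1_zero; [exact Ht | exact HtT | apply Hij].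
  - destruct (Nat.le_gt_cases i (S k)) as [Hle|Hgt]; [exact (IH t Ht HtT i j Hle Hij)|].
    replace i with (S (S k)) in * by lia.
    destruct (Rle_lt_or_eq_dec 0 t Ht) as [Htpos|<-]; [|exact (initial_zero _ _ Hij)].
    assert (Hwest : interior_node M N (S k) j) by (destruct Hij; split; lia).
    apply (Alap_zero_east h M N (X t) (S k) j h_neq0 Hij).
    + intros i' j' Hi'. exact (IH t Ht HtT i' j' Hi').
    + apply Alap_zero_off_jump; [exact Htpos | exact HtT | exact Hwest |].
      intros s Hs HsT. exact (IH s Hs HsT _ _ (le_n _) Hwest).
Qed.

Lemma X_zero_off_jump t :
  0 <= t -> t <> T -> forall i j, interior_node M N i j -> X t i j = 0.
Proof. intros Ht HtT i j. exact (X_zero_columns i t Ht HtT i j (le_S _ _ (le_n _))). Qed.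

End Propagation.

Lemma one_sided_limits_zero (T : R) (f : R -> R) lm lp :
  0 < T -> (forall s, 0 <= s -> s <> T -> f s = 0) ->
  filterlim f (at_left T) (locally lm) -> filterlim f (at_right T) (locally lp) ->
  lm = 0 /\ lp = 0.
Proof.
  intros HT Hzero Hl Hr. split.
  - apply (@filterlim_eventually_zero _ (at_left_proper_filter T) f lm); [|exact Hl].
    change (locally T (fun s => s < T -> f s = 0)).
    apply (filter_imp (fun s => 0 < s)); [intros s Hs HsT; apply Hzero; lra|].
    exact (open_gt 0 T HT).
  - apply (@filterlim_eventually_zero _ (at_right_proper_filter T) f lp); [|exact Hr].
    change (locally T (fun s => T < s -> f s = 0)).
    apply filter_forall. intros s HTs. apply Hzero; lra.
Qed.

Theorem theorem2p22 (h T : R) (M N : nat) (c : gridfun) (X : R -> gridfun) :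
  0 < h -> (2 <= M)%nat -> (2 <= N)%nat -> 0 < T ->
  (forall t, (0 < t < T \/ T < t) ->
     forall i j, interior_node M N i j ->
       is_derive (fun s => X s i j) t (Alap h M N (X t) i j)) ->
  (forall i j, interior_node M N i j ->
     X 0 i j = 0 /\ filterlim (fun s => X s i j) (at_right 0) (locally 0)) ->
  (forall i j, interior_node M N i j ->
     exists lm lp : R,
       filterlim (fun s => X s i j) (at_left T) (locally lm) /\
       filterlim (fun s => X s i j) (at_right T) (locally lp) /\
       lp - lm = c i j) ->
  (forall t, 0 <= t -> t <> T -> forall j, (j <= N)%nat -> ext M N (X t) 0%nat j = 0) ->
  (forall t, 0 <= t -> t <> T -> forall j, (1 <= j <= N - 1)%nat -> X t 1%nat j = 0) ->
  (forall t, 0 <= t -> t <> T -> forall i j, interior_node M N i j -> X t i j = 0) /\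
  (forall i j, interior_node M N i j -> c i j = 0).
Proof.
  intros Hh _ _ HT Hdyn Hinit Hjump _ HGamma1.
  assert (Hzero : forall t, 0 <= t -> t <> T ->
                    forall i j, interior_node M N i j -> X t i j = 0).
  { apply (X_zero_off_jump h T M N X); [lra | exact Hdyn | | exact HGamma1].
    intros i j Hij. apply (Hinit i j Hij). }
  split; [exact Hzero|].
  intros i j Hij.
  destruct (Hjump i j Hij) as (lm & lp & Hl & Hr & <-).
  destruct (one_sided_limits_zero T (fun s => X s i j) lm lp HT) as [-> ->];
    [intros s Hs HsT; exact (Hzero s Hs HsT i j Hij) | exact Hl | exact Hr | ring].
Qed.
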